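(* (a) The Schubert cell $S_{w_0,s_1}$ is the disjoint union of exactly two $G$-orbits of points $(P,Pw_0,Ps_1n)$: $n=n(1,0,0)$, dimension $7$, stabilizer $\{d(a,a,1/a^2):a\in\mathbb{R}^\times\}$; and $n=n(0,0,0)$, dimension $6$, stabilizer $D$. (b) The cell $S_{w_0,s_2}$ is the disjoint union of exactly two $G$-orbits of points $(P,Pw_0,Ps_2n)$: $n=n(0,0,1)$, dimension $7$, stabilizer $\{d(1/a^2,a,a):a\in\mathbb{R}^\times\}$; and $n=n(0,0,0)$, dimension $6$, stabilizer $D$. (c) The cell $S_{w_0,1}$ is a single $G$-orbit, that of $(P,Pw_0,P)$; it has dimension $6$ and stabilizer $D$.
   Context: $G=\mathrm{SL}_3(\mathbb{R})$, $P$ the upper triangular matrices in $G$, $D$ the diagonal matrices in $G$; $G$ acts on $X=(P\backslash G)^3$ by right multiplication in each coordinate. $n(x,y,z)=\begin{pmatrix}1&x&y\\0&1&z\\0&0&1\end{pmatrix}$, $d(a,b,c)=\operatorname{diag}(a,b,c)$. $1$ is the identity matrix, $w_0=\begin{pmatrix}0&0&-1\\0&-1&0\\-1&0&0\end{pmatrix}$, $s_1=\begin{pmatrix}0&1&0\\1&0&0\\0&0&-1\end{pmatrix}$, $s_2=\begin{pmatrix}-1&0&0\\0&0&1\\0&1&0\end{pmatrix}$. $S_{v,w}=\big(\{P\}\times P\backslash PvP\times P\backslash PwP\big)\cdot G$. The stabilizer of $(P,Pv,Pwn)$ is $P\cap v^{-1}Pv\cap (wn)^{-1}P(wn)$. 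*)

From HB Require Import structures.
From mathcomp Require Import all_boot all_order all_algebra.
From mathcomp Require Import reals.
Set Implicit Arguments. Unset Strict Implicit. Unset Printing Implicit Defensive.
Import Order.TTheory GRing.Theory Num.Theory.
Local Open Scope ring_scope.

Section SL3.
Variable R : realType.

Definition mx3 (a b c d e f g h k : R) : 'M[R]_3 :=
  \matrix_(i < 3, j < 3)
    nth 0 (nth [::] [:: [:: a; b; c]; [:: d; e; f]; [:: g; h; k]] i) j.

Definition inG (g : 'M[R]_3) : bool := \det g == 1.
Definition upper (g : 'M[R]_3) : bool :=
  [forall i : 'I_3, forall j : 'I_3, (j < i)%N ==> (g i j == 0)].
Definition inP (g : 'M[R]_3) : bool := inG g && upper g.

Definition nmx (x y z : R) : 'M[R]_3 := mx3 1 x y 0 1 z 0 0 1.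
Definition dmx (a b c : R) : 'M[R]_3 := mx3 a 0 0 0 b 0 0 0 c.
Definition w0 : 'M[R]_3 := mx3 0 0 (-1) 0 (-1) 0 (-1) 0 0.
Definition s1 : 'M[R]_3 := mx3 0 1 0 1 0 0 0 0 (-1).
Definition s2 : 'M[R]_3 := mx3 (-1) 0 0 0 0 1 0 1 0.

(* A point (Pg1, Pg2, Pg3) of X = (P\G)^3 is represented by a triple of
   representatives (g1, g2, g3) in G^3. *)
Definition pt := ('M[R]_3 * 'M[R]_3 * 'M[R]_3)%type.
Definition isPt (x : pt) : Prop := [/\ inG x.1.1, inG x.1.2 & inG x.2].

(* P g = P g'  iff  g' g^{-1} \in P *)
Definition sameCoset (g g' : 'M[R]_3) : bool := inP (g' *m invmx g).
Definition sameX (x y : pt) : Prop :=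
  [/\ sameCoset x.1.1 y.1.1, sameCoset x.1.2 y.1.2 & sameCoset x.2 y.2].

Definition act (x : pt) (h : 'M[R]_3) : pt := (x.1.1 *m h, x.1.2 *m h, x.2 *m h).

Definition inOrbit (x y : pt) : Prop := exists h, inG h /\ sameX (act x h) y.

Definition bruhat (v g : 'M[R]_3) : Prop :=
  exists p1 p2, [/\ inP p1, inP p2 & g = p1 *m v *m p2].

(* S_{v,w} = ({P} x P\PvP x P\PwP).G : y = (P, Pa, Pb).h with a \in PvP, b \in PwP *)
Definition inS (v w : 'M[R]_3) (y : pt) : Prop :=
  isPt y /\ exists h, [/\ inG h, inP (y.1.1 *m invmx h),
                          bruhat v (y.1.2 *m invmx h) & bruhat w (y.2 *m invmx h)].

Definition inStab (x : pt) (h : 'M[R]_3) : Prop := inG h /\ sameX (act x h) x.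

(* Lie algebra of the stabilizer of x = (Pg1,Pg2,Pg3):
   sl_3 \cap g1^{-1} b g1 \cap g2^{-1} b g2 \cap g3^{-1} b g3, b = upper triangular *)
Definition stabLie (x : pt) (X : 'M[R]_3) : Prop :=
  [/\ \tr X = 0, upper (x.1.1 *m X *m invmx x.1.1),
      upper (x.1.2 *m X *m invmx x.1.2) & upper (x.2 *m X *m invmx x.2)].

(* the G-orbit of x has dimension d: dim G - dim Lie(Stab x) = d, dim G = 8 *)
Definition orbit_dim (x : pt) (d : nat) : Prop :=
  exists (k : nat) (s : k.-tuple 'M[R]_3),
    [/\ (k + d)%N = 8%N, free s & forall X, stabLie x X <-> X \in <<s>>%VS].

End SL3.

From HB Require Import structures.
From mathcomp Require Import all_boot all_order all_algebra.
From mathcomp Require Import reals ring lra.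
Import Order.TTheory GRing.Theory Num.Theory.
Local Open Scope ring_scope.
Set Implicit Arguments. Unset Strict Implicit. Unset Printing Implicit Defensive.

(* The pair (P, P w0) has stabilizer D = P cap w0^-1 P w0, so every point of
   S_{w0,s} = ({P} x P\P w0 P x P\P s P).G is G-equivalent to some (P, P w0, P s r)
   with r in P, and two such points (P, P w0, P m), (P, P w0, P m') lie in one orbit
   iff m' is in P m D.  The orbits in S_{w0,s} are thus the double cosets P\P s P/D:
   writing r upper triangular, s1 r lies in P s1 n(1,0,0) D when r_12 <> 0 and in
   P s1 D otherwise (for s2 the entry r_23 decides).  The stabilizer of (P, P w0, P m)
   is {d in D | m d m^-1 in P}, and its Lie algebra is computed the same way inside
   the trace-zero diagonal matrices. *)

Section SL3.
Variable R : realType.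

Lemma mul_mx3 (a b c d e f g h k a' b' c' d' e' f' g' h' k' : R) :
  mx3 a b c d e f g h k *m mx3 a' b' c' d' e' f' g' h' k' =
  mx3 (a*a'+b*d'+c*g') (a*b'+b*e'+c*h') (a*c'+b*f'+c*k')
      (d*a'+e*d'+f*g') (d*b'+e*e'+f*h') (d*c'+e*f'+f*k')
      (g*a'+h*d'+k*g') (g*b'+h*e'+k*h') (g*c'+h*f'+k*k').
Proof.
apply/matrixP => i j; rewrite !mxE !big_ord_recr big_ord0 /= !mxE /=.
by case: i => [[|[|[|i]]] Hi] //; case: j => [[|[|[|j]]] Hj] //=; rewrite add0r.
Qed.

Lemma mx3_eta (M : 'M[R]_3) :
  M = mx3 (M 0 0) (M 0 1) (M 0 2) (M 1 0) (M 1 1) (M 1 2) (M 2 0) (M 2 1) (M 2 2).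
Proof.
apply/matrixP => i j; rewrite !mxE.
by case: i => [[|[|[|i]]] Hi] //; case: j => [[|[|[|j]]] Hj] //=; congr (M _ _); apply/val_inj.
Qed.

Lemma mx3_inj (a b c d e f g h k a' b' c' d' e' f' g' h' k' : R) :
  mx3 a b c d e f g h k = mx3 a' b' c' d' e' f' g' h' k' ->
  [/\ [/\ a = a', b = b' & c = c'], [/\ d = d', e = e' & f = f']
    & [/\ g = g', h = h' & k = k']].
Proof.
move=> E; have F i j : mx3 a b c d e f g h k i j = mx3 a' b' c' d' e' f' g' h' k' i j.
  by rewrite E.
move: (F 0 0) (F 0 1) (F 0 2) (F 1 0) (F 1 1) (F 1 2) (F 2 0) (F 2 1) (F 2 2).
by rewrite !mxE /=.
Qed.

Lemma det_mx3 (a b c d e f g h k : R) :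
  \det (mx3 a b c d e f g h k) = a*(e*k - f*h) - b*(d*k - f*g) + c*(d*h - e*g).
Proof.
rewrite (expand_det_row _ 0) !big_ord_recr big_ord0 /= add0r.
rewrite /cofactor !(expand_det_row _ 0) !big_ord_recr big_ord0 /= !add0r.
rewrite /cofactor !det_mx11 !mxE /= !big_ord0 /= !addn0 !add0n /=; ring.
Qed.

Lemma tr_mx3 (a b c d e f g h k : R) : \tr (mx3 a b c d e f g h k) = a + e + k.
Proof. by rewrite /mxtrace !big_ord_recr big_ord0 !mxE /= add0r. Qed.

Lemma scale_mx3 (t a b c d e f g h k : R) :
  t *: mx3 a b c d e f g h k = mx3 (t*a) (t*b) (t*c) (t*d) (t*e) (t*f) (t*g) (t*h) (t*k).
Proof.
apply/matrixP => i j; rewrite !mxE.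
by case: i => [[|[|[|i]]] Hi] //; case: j => [[|[|[|j]]] Hj] //=; rewrite mulr0.
Qed.

Lemma add_mx3 (a b c d e f g h k a' b' c' d' e' f' g' h' k' : R) :
  mx3 a b c d e f g h k + mx3 a' b' c' d' e' f' g' h' k' =
  mx3 (a+a') (b+b') (c+c') (d+d') (e+e') (f+f') (g+g') (h+h') (k+k').
Proof.
apply/matrixP => i j; rewrite !mxE.
by case: i => [[|[|[|i]]] Hi] //; case: j => [[|[|[|j]]] Hj] //=; rewrite addr0.
Qed.

Lemma mx3_1 : 1%:M = mx3 1 0 0 0 1 0 0 0 (1 : R).
Proof.
apply/matrixP => i j; rewrite !mxE.
by case: i => [[|[|[|i]]] Hi] //; case: j => [[|[|[|j]]] Hj] //=.
Qed.

Lemma upper_mx3 (a b c d e f g h k : R) :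
  upper (mx3 a b c d e f g h k) = [&& d == 0, g == 0 & h == 0].
Proof.
apply/forallP/and3P => [U|[/eqP d0 /eqP g0 /eqP h0] i].
  by split; [move: (U 1) | move: (U 2) | move: (U 2)] => /forallP;
    [move/(_ 0) | move/(_ 0) | move/(_ 1)]; rewrite mxE.
apply/forallP => j; apply/implyP; rewrite mxE.
by case: i => [[|[|[|i]]] Hi] //; case: j => [[|[|[|j]]] Hj] //=; rewrite ?d0 ?g0 ?h0.
Qed.

Lemma upperP (M : 'M[R]_3) :
  upper M <-> exists a b c e f k, M = mx3 a b c 0 e f 0 0 k.
Proof.
split => [|[a [b [c [e [f [k ->]]]]]]]; last by rewrite upper_mx3 !eqxx.
by rewrite [M]mx3_eta upper_mx3 => /and3P[/eqP-> /eqP-> /eqP->]; do 6 eexists.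
Qed.

Lemma upper_dmx (a b c : R) : upper (dmx a b c).
Proof. by rewrite upper_mx3 !eqxx. Qed.

Lemma prod3_eq1_neq0 (a b c : R) : a * b * c = 1 -> [/\ a != 0, b != 0 & c != 0].
Proof.
by move=> D; split; apply/eqP => Z; move: D; rewrite Z ?mulr0 ?mul0r => /eqP;
  rewrite eq_sym oner_eq0.
Qed.

Lemma det_dmx (a b c : R) : \det (dmx a b c) = a * b * c.
Proof. by rewrite det_mx3; ring. Qed.

Lemma inG_unit (g : 'M[R]_3) : inG g -> g \in unitmx.
Proof. by rewrite /inG unitmxE => /eqP ->; rewrite unitr1. Qed.

Lemma inG_mul (g h : 'M[R]_3) : inG g -> inG h -> inG (g *m h).
Proof. by rewrite /inG det_mulmx => /eqP -> /eqP ->; rewrite mulr1. Qed.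

Lemma inG1 : inG (1%:M : 'M[R]_3).
Proof. by rewrite /inG det1. Qed.

Lemma mulmx1_invmx (A B : 'M[R]_3) : A *m B = 1%:M -> invmx A = B.
Proof.
by move=> AB; have [uA _] := mulmx1_unit AB; rewrite -[RHS](mulKmx uA) AB mulmx1.
Qed.

Lemma inPP (p : 'M[R]_3) :
  inP p <-> exists a b c e f k, a * e * k = 1 /\ p = mx3 a b c 0 e f 0 0 k.
Proof.
split => [/andP[/eqP D /upperP[a [b [c [e [f [k E]]]]]]] | [a [b [c [e [f [k [D E]]]]]]]].
  by do 6 eexists; split; last exact: E; rewrite -D E det_mx3; ring.
apply/andP; split; last by rewrite E upper_mx3 !eqxx.
by rewrite /inG E det_mx3 -D; apply/eqP; ring.
Qed.

Lemma inP_inG (p : 'M[R]_3) : inP p -> inG p.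
Proof. by case/andP. Qed.

Lemma inP1 : inP (1%:M : 'M[R]_3).
Proof. by rewrite /inP inG1 mx3_1 upper_mx3 !eqxx. Qed.

Lemma inP_mul (p q : 'M[R]_3) : inP p -> inP q -> inP (p *m q).
Proof.
move=> /inPP[a [b [c [e [f [k [D ->]]]]]]] /inPP[a' [b' [c' [e' [f' [k' [D' ->]]]]]]].
apply/inPP; rewrite mul_mx3; do 6 eexists; split; last by congr mx3; ring.
by rewrite -[1]mulr1 -{1}D -D'; ring.
Qed.

Lemma inP_inv (p : 'M[R]_3) : inP p -> inP (invmx p).
Proof.
move=> /inPP[a [b [c [e [f [k [D ->]]]]]]].
rewrite (@mulmx1_invmx _ (mx3 (e*k) (-b*k) (b*f - c*e) 0 (a*k) (-a*f) 0 0 (a*e))).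
  by apply/inPP; do 6 eexists; split; last reflexivity; rewrite -[1]mulr1 -D; ring.
by rewrite mul_mx3 mx3_1 -D; congr mx3; ring.
Qed.

Lemma dmx_inP (a b c : R) : a * b * c = 1 -> inP (dmx a b c).
Proof. by move=> D; apply/inPP; exists a, 0, 0, b, 0, c. Qed.

Lemma nmx_inP (x y z : R) : inP (nmx x y z).
Proof. by apply/inPP; exists 1, x, y, 1, z, 1; rewrite !mulr1. Qed.

Lemma sameCosetP (g g' : 'M[R]_3) :
  inG g -> sameCoset g g' <-> exists2 p, inP p & g' = p *m g.
Proof.
move=> /inG_unit ug; split => [S | [p Pp ->]]; last by rewrite /sameCoset mulmxK.
by exists (g' *m invmx g); rewrite ?mulmxKV.
Qed.

Lemma sameCoset_trans (g1 g2 g3 : 'M[R]_3) : inG g1 -> inG g2 ->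
  sameCoset g1 g2 -> sameCoset g2 g3 -> sameCoset g1 g3.
Proof.
move=> G1 G2 /(sameCosetP _ G1)[p Pp ->] /(sameCosetP _ (inG_mul (inP_inG Pp) G1))[q Pq ->].
by apply/sameCosetP => //; exists (q *m p); rewrite ?mulmxA ?inP_mul.
Qed.

Lemma sameCoset_mulmxr (g g' h : 'M[R]_3) : inG g -> inG h ->
  sameCoset g g' -> sameCoset (g *m h) (g' *m h).
Proof.
move=> Gg Gh /(sameCosetP _ Gg)[p Pp ->].
by apply/sameCosetP; [exact: inG_mul | exists p; rewrite ?mulmxA].
Qed.

Lemma inOrbit_trans (x y z : pt R) : isPt x -> isPt y ->
  inOrbit x y -> inOrbit y z -> inOrbit x z.
Proof.
case: x y z => [[x1 x2] x3] [[y1 y2] y3] [[z1 z2] z3] [/= X1 X2 X3] [/= Y1 Y2 Y3].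
case=> h [Gh [/= S1 S2 S3]] [h' [Gh' [/= T1 T2 T3]]].
have step g g' k : inG g -> inG g' -> sameCoset (g *m h) g' -> sameCoset (g' *m h') k ->
    sameCoset (g *m (h *m h')) k.
  move=> G G' S T; rewrite mulmxA.
  apply: (sameCoset_trans (inG_mul (inG_mul G Gh) Gh') (inG_mul G' Gh') _ T).
  exact: sameCoset_mulmxr (inG_mul G Gh) Gh' S.
exists (h *m h'); split; first exact: inG_mul.
by split; [exact: step X1 Y1 S1 T1 | exact: step X2 Y2 S2 T2 | exact: step X3 Y3 S3 T3].
Qed.

Definition base (m : 'M[R]_3) : pt R := (1%:M, w0 R, m).

Definition inD (d : 'M[R]_3) : Prop := inG d /\ exists a b c, d = dmx a b c.

Definition in_PmD (m g : 'M[R]_3) : Prop :=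
  exists p d, [/\ inP p, inD d & g = p *m m *m d].

Lemma w0_inG : inG (w0 R).
Proof. by rewrite /inG det_mx3; apply/eqP; ring. Qed.

Lemma base_isPt (m : 'M[R]_3) : inG m -> isPt (base m).
Proof. by split; [exact: inG1 | exact: w0_inG |]. Qed.

Lemma dmx_inD (a b c : R) : a * b * c = 1 -> inD (dmx a b c).
Proof. by move=> D; split; [rewrite /inG det_dmx D | exists a, b, c]. Qed.

Lemma inD_dmx (d : 'M[R]_3) : inD d -> exists a b c, a * b * c = 1 /\ d = dmx a b c.
Proof.
case=> Gd [a [b [c Ed]]]; exists a, b, c; split => //.
by move: Gd; rewrite /inG Ed det_dmx => /eqP.
Qed.

Lemma inD_inP (d : 'M[R]_3) : inD d -> inP d.
Proof. by case=> Gd [a [b [c Ed]]]; rewrite /inP Gd Ed upper_dmx. Qed.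

Lemma prod3V (a b c : R) : a * b * c = 1 -> a^-1 * b^-1 * c^-1 = 1.
Proof. by move=> D; rewrite -!invfM D invr1. Qed.

Lemma w0_conj_dmx (a b c : R) : a * b * c = 1 ->
  dmx c^-1 b^-1 a^-1 *m w0 R *m dmx a b c = w0 R.
Proof.
move=> /prod3_eq1_neq0[a0 b0 c0].
by rewrite !mul_mx3; congr mx3; field; rewrite ?a0 ?b0 ?c0.
Qed.

(* The stabilizer of (P, P w0) in P, i.e. P cap w0^-1 P w0, is the diagonal torus. *)
Lemma inP_w0_conj_diag (p h : 'M[R]_3) : inP p -> inP h -> w0 R = p *m w0 R *m h ->
  exists a b c, h = dmx a b c.
Proof.
move=> /inPP[a [b [c [e [f [k [D ->]]]]]]] /inPP[u [v [w [x [y [z [_ ->]]]]]]].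
rewrite !mul_mx3 => /mx3_inj[[E11 E12 E13] [E21 E22 E23] [E31 E32 E33]].
have [a0 e0 k0] := prod3_eq1_neq0 D.
have v0 : v = 0 by apply: (mulfI k0); lra.
have w_0 : w = 0 by apply: (mulfI k0); lra.
have y0 : y = 0 by apply: (mulfI e0); move: E23; rewrite w_0; lra.
by exists u, x, z; rewrite v0 w_0 y0.
Qed.

Lemma sameCoset1 (h : 'M[R]_3) : inG h -> sameCoset h 1%:M <-> inP h.
Proof.
move=> Gh; rewrite /sameCoset mul1mx.
by split => [/inP_inv | /inP_inv //]; rewrite invmxK.
Qed.

Lemma sameX_act_base (m m' h : 'M[R]_3) : inG m -> inG h ->
  sameX (act (base m) h) (base m') <-> inD h /\ exists2 p, inP p & m' = p *m m *m h.
Proof.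
move=> Gm Gh; have Gw0h := inG_mul w0_inG Gh; have Gmh := inG_mul Gm Gh.
rewrite /sameX /act /base /= mul1mx.
split => [[/(sameCoset1 Gh) Ph /(sameCosetP _ Gw0h)[p Pp E2] /(sameCosetP _ Gmh)[q Pq E3]] | ].
  split; last by exists q; rewrite // E3 mulmxA.
  by split => //; apply: inP_w0_conj_diag Pp Ph _; rewrite -mulmxA.
case=> /inD_dmx[a [b [c [D Eh]]]] [q Pq E3]; split.
- by apply/(sameCoset1 Gh); rewrite Eh; exact: dmx_inP.
- apply/sameCosetP => //; exists (dmx c^-1 b^-1 a^-1).
    by apply: dmx_inP; rewrite -(prod3V D); ring.
  by rewrite mulmxA Eh w0_conj_dmx.
- by apply/sameCosetP => //; exists q; rewrite // E3 mulmxA.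
Qed.

Lemma inOrbit_base (m m' : 'M[R]_3) : inG m ->
  inOrbit (base m) (base m') <-> in_PmD m m'.
Proof.
move=> Gm; split => [[h [Gh /(sameX_act_base _ Gm Gh)[Dh [p Pp E]]]] | [p [d [Pp Dd E]]]].
  by exists p, h.
have Gd := inP_inG (inD_inP Dd).
by exists d; split => //; apply/(sameX_act_base _ Gm Gd); split => //; exists p.
Qed.

Lemma inStab_base (m h : 'M[R]_3) : inG m ->
  inStab (base m) h <-> inD h /\ exists2 p, inP p & m = p *m m *m h.
Proof.
move=> Gm; split => [[Gh /(sameX_act_base _ Gm Gh)] // | [Dh E]].
have Gh := inP_inG (inD_inP Dh).
by split => //; apply/(sameX_act_base _ Gm Gh).
Qed.

(* (P, P p1 w0 p2 h, P q1 s q2 h) = (P, P w0, P s q2 p2^-1) . (p2 h) *)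
Lemma inS_w0_base (s : 'M[R]_3) (y : pt R) : inG s -> inS (w0 R) s y ->
  exists2 r, inP r & inOrbit (base (s *m r)) y.
Proof.
case: y => [[y1 y2] y3] Gs [_ [h [Gh /= P0 [p1 [p2 [P1 P2 E2]]] [q1 [q2 [Q1 Q2 E3]]]]]].
have uh := inG_unit Gh; have up2 := inG_unit (inP_inG P2).
have Gp2h := inG_mul (inP_inG P2) Gh.
have Gr : inG (s *m (q2 *m invmx p2)).
  by apply: inG_mul Gs (inP_inG (inP_mul Q2 (inP_inv P2))).
exists (q2 *m invmx p2); first by rewrite inP_mul ?inP_inv.
exists (p2 *m h); split => //; split => /=.
- apply/sameCosetP; first by rewrite mul1mx.
  exists (y1 *m invmx h *m invmx p2); first by rewrite inP_mul ?inP_inv.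
  by rewrite mul1mx !mulmxA mulmxKV // mulmxKV.
- apply/sameCosetP; first exact: inG_mul w0_inG Gp2h.
  by exists p1; rewrite // !mulmxA -E2 mulmxKV.
- apply/sameCosetP; first exact: inG_mul Gr Gp2h.
  by exists q1; rewrite // !mulmxA -(mulmxA _ _ p2) mulVmx // mulmx1 -E3 mulmxKV.
Qed.

Lemma base_inS_w0 (s r : 'M[R]_3) (y : pt R) : inG s -> inP r -> isPt y ->
  inOrbit (base (s *m r)) y -> inS (w0 R) s y.
Proof.
case: y => [[y1 y2] y3] Gs Pr Py [h [Gh [/= S1 S2 S3]]]; split => //.
have uh := inG_unit Gh; have Gsr := inG_mul Gs (inP_inG Pr).
move/sameCosetP: S1 => /(_ (inG_mul inG1 Gh))[p1 P1 ->].
move/sameCosetP: S2 => /(_ (inG_mul w0_inG Gh))[p2 P2 ->].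
move/sameCosetP: S3 => /(_ (inG_mul Gsr Gh))[p3 P3 ->].
exists h; split => //=; rewrite !mulmxA mulmxK //; first by rewrite mulmx1.
- by exists p2, 1%:M; rewrite mulmx1 inP1.
- by exists p3, r.
Qed.

Lemma s1_inG : inG (s1 R).
Proof. by rewrite /inG det_mx3; apply/eqP; ring. Qed.

Lemma s2_inG : inG (s2 R).
Proof. by rewrite /inG det_mx3; apply/eqP; ring. Qed.

Lemma s1_PmD (r : 'M[R]_3) : inP r ->
  in_PmD (s1 R *m nmx 1 0 0) (s1 R *m r) \/ in_PmD (s1 R *m nmx 0 0 0) (s1 R *m r).
Proof.
move=> /inPP[a [b [c [e [f [k [D ->]]]]]]]; have [a0 e0 k0] := prod3_eq1_neq0 D.
have [-> | b0] := eqVneq b 0.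
  right; exists (mx3 e 0 (-f) 0 a (-c) 0 0 k), (dmx 1 1 1); split.
  - by apply/inPP; do 6 eexists; split; last reflexivity; rewrite -D; ring.
  - by apply: dmx_inD; rewrite !mulr1.
  - by rewrite !mul_mx3; congr mx3; ring.
left; exists (mx3 (e/b) 0 (-f*a*b) 0 1 (-c*a*b) 0 0 (k*a*b)), (dmx a b (a*b)^-1); split.
- by apply/inPP; do 6 eexists; split; last reflexivity; rewrite mulr1 -D; field.
- by apply: dmx_inD; field; rewrite a0 b0.
- by rewrite !mul_mx3; congr mx3; field; rewrite ?a0 ?b0.
Qed.

Lemma s2_PmD (r : 'M[R]_3) : inP r ->
  in_PmD (s2 R *m nmx 0 0 1) (s2 R *m r) \/ in_PmD (s2 R *m nmx 0 0 0) (s2 R *m r).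
Proof.
move=> /inPP[a [b [c [e [f [k [D ->]]]]]]]; have [a0 e0 k0] := prod3_eq1_neq0 D.
have [-> | f0] := eqVneq f 0.
  right; exists (mx3 a (-c) (-b) 0 k 0 0 0 e), (dmx 1 1 1); split.
  - by apply/inPP; do 6 eexists; split; last reflexivity; rewrite -D; ring.
  - by apply: dmx_inD; rewrite !mulr1.
  - by rewrite !mul_mx3; congr mx3; ring.
left; exists (mx3 (a*e*f) (-c/f + b/e) (-b/e) 0 (k/f) 0 0 0 1), (dmx (e*f)^-1 e f); split.
- by apply/inPP; do 6 eexists; split; last reflexivity; rewrite mulr1 -D; field.
- by apply: dmx_inD; field; rewrite e0 f0.
- by rewrite !mul_mx3; congr mx3; field; rewrite ?e0 ?f0.
Qed.

Lemma inS_w0_two_orbits (s n1 n2 : 'M[R]_3) (y : pt R) :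
  inG s -> inP n1 -> inP n2 ->
  (forall r, inP r -> in_PmD (s *m n1) (s *m r) \/ in_PmD (s *m n2) (s *m r)) ->
  inS (w0 R) s y <-> isPt y /\ (inOrbit (base (s *m n1)) y \/ inOrbit (base (s *m n2)) y).
Proof.
move=> Gs P1 P2 cover; split => [Sy | [Py [O|O]]]; last 2 first.
- exact: base_inS_w0 P1 Py O.
- exact: base_inS_w0 P2 Py O.
have [r Pr Ory] := inS_w0_base Gs Sy; split; first by case: Sy.
have Gsr := inG_mul Gs (inP_inG Pr).
have orbit_of n : inP n -> in_PmD (s *m n) (s *m r) -> inOrbit (base (s *m n)) y.
  move=> Pn PmD; have Gsn := inG_mul Gs (inP_inG Pn).
  apply: inOrbit_trans (base_isPt Gsn) (base_isPt Gsr) _ Ory.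
  exact/inOrbit_base.
by case: (cover r Pr) => PmD; [left; exact: orbit_of P1 PmD | right; exact: orbit_of P2 PmD].
Qed.

Lemma inS_w0_1_orbit (y : pt R) : inS (w0 R) 1%:M y <-> isPt y /\ inOrbit (base 1%:M) y.
Proof.
have cover r : inP r -> in_PmD (1%:M *m 1%:M) (1%:M *m r).
  move=> Pr; exists r, 1%:M; split => //; last by rewrite !mul1mx !mulmx1.
  by split; [exact: inG1 | exists 1, 1, 1; rewrite mx3_1].
rewrite (inS_w0_two_orbits _ inG1 inP1 inP1 (fun r Pr => or_introl (cover r Pr))) mulmx1.
by split => [[Py [O|O]] | [Py O]]; split => //; left.
Qed.

Lemma s1n_inG (x y z : R) : inG (s1 R *m nmx x y z).
Proof. exact: inG_mul s1_inG (inP_inG (nmx_inP x y z)). Qed.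

Lemma s2n_inG (x y z : R) : inG (s2 R *m nmx x y z).
Proof. exact: inG_mul s2_inG (inP_inG (nmx_inP x y z)). Qed.

Lemma not_inOrbit_s1 :
  ~ inOrbit (base (s1 R *m nmx 1 0 0)) (base (s1 R *m nmx 0 0 0)).
Proof.
move/(inOrbit_base _ (s1n_inG _ _ _)) => [p [d [/inPP[a [b [c [e [f [k [Dp ->]]]]]]] Dd E]]].
move: Dd E => /inD_dmx[u [x [z [D ->]]]].
rewrite !mul_mx3 => /mx3_inj[[E11 E12 E13] [E21 E22 E23] [E31 E32 E33]].
have [_ e0 _] := prod3_eq1_neq0 Dp; have [_ /eqP x0 _] := prod3_eq1_neq0 D.
by apply: x0; apply: (mulfI e0); rewrite mulr0; lra.
Qed.

Lemma not_inOrbit_s2 :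
  ~ inOrbit (base (s2 R *m nmx 0 0 1)) (base (s2 R *m nmx 0 0 0)).
Proof.
move/(inOrbit_base _ (s2n_inG _ _ _)) => [p [d [/inPP[a [b [c [e [f [k [Dp ->]]]]]]] Dd E]]].
move: Dd E => /inD_dmx[u [x [z [D ->]]]].
rewrite !mul_mx3 => /mx3_inj[[E11 E12 E13] [E21 E22 E23] [E31 E32 E33]].
have [_ _ k0] := prod3_eq1_neq0 Dp; have [_ _ /eqP z0] := prod3_eq1_neq0 D.
by apply: z0; apply: (mulfI k0); rewrite mulr0; lra.
Qed.

Lemma inStab_base_D (m h : 'M[R]_3) : inG m ->
  (forall a b c, a * b * c = 1 -> exists2 p, inP p & m = p *m m *m dmx a b c) ->
  inStab (base m) h <-> inD h.
Proof.
move=> Gm mD; split => [/(inStab_base _ Gm)[] // | Dh].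
apply/(inStab_base _ Gm); split => //.
by have [a [b [c [D ->]]]] := inD_dmx Dh; exact: mD.
Qed.

Lemma inStab_s1 (h : 'M[R]_3) : inStab (base (s1 R *m nmx 0 0 0)) h <-> inD h.
Proof.
apply: inStab_base_D (s1n_inG _ _ _) _ => a b c D; have [a0 b0 c0] := prod3_eq1_neq0 D.
exists (dmx b^-1 a^-1 c^-1); first by apply: dmx_inP; rewrite -(prod3V D); ring.
by rewrite !mul_mx3; congr mx3; field.
Qed.

Lemma inStab_s2 (h : 'M[R]_3) : inStab (base (s2 R *m nmx 0 0 0)) h <-> inD h.
Proof.
apply: inStab_base_D (s2n_inG _ _ _) _ => a b c D; have [a0 b0 c0] := prod3_eq1_neq0 D.
exists (dmx a^-1 c^-1 b^-1); first by apply: dmx_inP; rewrite -(prod3V D); ring.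
by rewrite !mul_mx3; congr mx3; field.
Qed.

Lemma inStab_1 (h : 'M[R]_3) : inStab (base 1%:M) h <-> inD h.
Proof.
apply: inStab_base_D inG1 _ => a b c D; have [a0 b0 c0] := prod3_eq1_neq0 D.
exists (dmx a^-1 b^-1 c^-1); first exact/dmx_inP/prod3V.
by rewrite mx3_1 !mul_mx3; congr mx3; field.
Qed.

Lemma inStab_s1n (h : 'M[R]_3) :
  inStab (base (s1 R *m nmx 1 0 0)) h <-> exists a, a != 0 /\ h = dmx a a (a ^-2).
Proof.
rewrite inStab_base; last exact: s1n_inG.
split => [[/inD_dmx[u [x [z [D ->]]]] [p /inPP[a [b [c [e [f [k [Dp ->]]]]]]]]] | [a [a0 ->]]].
  rewrite !mul_mx3 => /mx3_inj[[E11 E12 E13] [E21 E22 E23] [E31 E32 E33]].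
  have [_ e0 _] := prod3_eq1_neq0 Dp; have [u0 _ _] := prod3_eq1_neq0 D.
  have xu : x = u by apply: (mulfI e0); lra.
  exists u; split => //; rewrite xu; congr dmx.
  by rewrite -[RHS]mulr1 -D xu; field.
split; first by apply: dmx_inD; field.
exists (dmx a^-1 a^-1 (a ^+ 2)); first by apply: dmx_inP; field.
by rewrite !mul_mx3; congr mx3; field.
Qed.

Lemma inStab_s2n (h : 'M[R]_3) :
  inStab (base (s2 R *m nmx 0 0 1)) h <-> exists a, a != 0 /\ h = dmx (a ^-2) a a.
Proof.
rewrite inStab_base; last exact: s2n_inG.
split => [[/inD_dmx[u [x [z [D ->]]]] [p /inPP[a [b [c [e [f [k [Dp ->]]]]]]]]] | [a [a0 ->]]].
  rewrite !mul_mx3 => /mx3_inj[[E11 E12 E13] [E21 E22 E23] [E31 E32 E33]].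
  have [_ _ k0] := prod3_eq1_neq0 Dp; have [_ x0 _] := prod3_eq1_neq0 D.
  have zx : z = x by apply: (mulfI k0); lra.
  exists x; split => //; rewrite zx; congr dmx.
  by rewrite -[RHS]mulr1 -D zx; field.
split; first by apply: dmx_inD; field.
exists (dmx (a ^+ 2) a^-1 a^-1); first by apply: dmx_inP; field.
by rewrite !mul_mx3; congr mx3; field.
Qed.

Lemma w0_invmx : invmx (w0 R) = w0 R.
Proof. by apply: mulmx1_invmx; rewrite mul_mx3 mx3_1; congr mx3; ring. Qed.

Lemma stabLie_base (m mi X : 'M[R]_3) : invmx m = mi ->
  stabLie (base m) X <->
  [/\ \tr X = 0, upper X, upper (w0 R *m X *m w0 R) & upper (m *m X *m mi)].
Proof. by move=> <-; rewrite /stabLie /= w0_invmx invmx1 mul1mx mulmx1. Qed.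

Lemma dmx_neq0 (a b c : R) : b != 0 -> dmx a b c != 0.
Proof.
move=> b0; apply/eqP => /(congr1 (fun M : 'M[R]_3 => M 1 1))/eqP.
by rewrite !mxE /= (negPf b0).
Qed.

Lemma span_diag_sl3 (X : 'M[R]_3) :
  X \in <<[:: dmx 1 (-1) 0; dmx 0 1 (-1)]>>%VS <-> exists a b, X = dmx a (b - a) (- b).
Proof.
rewrite span_cons span_seq1; split.
  case/memv_addP => _ /vlineP[a ->] [_ /vlineP[b ->] ->].
  by exists a, b; rewrite !scale_mx3 add_mx3; congr mx3; ring.
case=> a [b ->]; apply/memv_addP; exists (a *: dmx 1 (-1) 0); first exact: memvZ (memv_line _).
exists (b *: dmx 0 1 (-1)); first exact: memvZ (memv_line _).
by rewrite !scale_mx3 add_mx3; congr mx3; ring.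
Qed.

Lemma free_diag_sl3 : free [:: dmx 1 (-1) 0; dmx 0 1 (-1 : R)].
Proof.
rewrite free_cons seq1_free span_seq1 dmx_neq0 ?oner_neq0 // andbT.
apply/negP => /vlineP[t /(congr1 (fun M : 'M[R]_3 => M 0 0))].
by rewrite scale_mx3 !mxE /= mulr0; apply/eqP; exact: oner_neq0.
Qed.

(* The stabilizer algebra is then the trace-zero diagonal, of dimension 2. *)
Lemma orbit_dim_base_D (m mi : 'M[R]_3) : invmx m = mi ->
  (forall a b c, upper (m *m dmx a b c *m mi)) -> orbit_dim (base m) 6.
Proof.
move=> Emi mD; exists 2%N, [tuple dmx 1 (-1) 0; dmx 0 1 (-1)]; split => //=.
  exact: free_diag_sl3.
move=> X; rewrite (stabLie_base X Emi) span_diag_sl3; split.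
  rewrite [X]mx3_eta tr_mx3 /w0 !mul_mx3 !upper_mx3.
  move=> [T /and3P[/eqP X10 /eqP X20 /eqP X21] /and3P[/eqP X01 /eqP X02 /eqP X12] _].
  by exists (X 0 0), (- X 2 2); rewrite /dmx; congr mx3; lra.
case=> a [b ->]; split; [by rewrite tr_mx3; ring | exact: upper_dmx | | exact: mD].
by rewrite !mul_mx3 upper_mx3; apply/and3P; split; apply/eqP; ring.
Qed.

Lemma orbit_dim_s1 : orbit_dim (base (s1 R *m nmx 0 0 0)) 6.
Proof.
apply: (@orbit_dim_base_D _ (s1 R)) => [|a b c].
  by apply: mulmx1_invmx; rewrite !mul_mx3 mx3_1; congr mx3; ring.
by rewrite !mul_mx3 upper_mx3; apply/and3P; split; apply/eqP; ring.
Qed.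

Lemma orbit_dim_s2 : orbit_dim (base (s2 R *m nmx 0 0 0)) 6.
Proof.
apply: (@orbit_dim_base_D _ (s2 R)) => [|a b c].
  by apply: mulmx1_invmx; rewrite !mul_mx3 mx3_1; congr mx3; ring.
by rewrite !mul_mx3 upper_mx3; apply/and3P; split; apply/eqP; ring.
Qed.

Lemma orbit_dim_1 : orbit_dim (base 1%:M) 6.
Proof.
by apply: orbit_dim_base_D (invmx1 _ _) _ => a b c; rewrite mul1mx mulmx1 upper_dmx.
Qed.

Lemma orbit_dim_s1n : orbit_dim (base (s1 R *m nmx 1 0 0)) 7.
Proof.
have Emi : invmx (s1 R *m nmx 1 0 0) = nmx (-1) 0 0 *m s1 R.
  by apply: mulmx1_invmx; rewrite !mul_mx3 mx3_1; congr mx3; ring.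
exists 1%N, [tuple dmx 1 1 (-2)]; split => //=; first by rewrite seq1_free dmx_neq0 ?oner_neq0.
move=> X; rewrite (stabLie_base X Emi) span_seq1; split.
  rewrite [X]mx3_eta tr_mx3 /w0 !mul_mx3 !upper_mx3.
  move=> [T /and3P[/eqP X10 /eqP X20 /eqP X21] /and3P[/eqP X01 /eqP X02 /eqP X12]
           /and3P[/eqP Y10 /eqP Y20 /eqP Y21]].
  by apply/vlineP; exists (X 0 0); rewrite scale_mx3; congr mx3; lra.
move=> /vlineP[t ->]; rewrite scale_mx3; split.
- by rewrite tr_mx3; ring.
- by rewrite upper_mx3; apply/and3P; split; apply/eqP; ring.
- by rewrite !mul_mx3 upper_mx3; apply/and3P; split; apply/eqP; ring.
- by rewrite !mul_mx3 upper_mx3; apply/and3P; split; apply/eqP; ring.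
Qed.

Lemma orbit_dim_s2n : orbit_dim (base (s2 R *m nmx 0 0 1)) 7.
Proof.
have Emi : invmx (s2 R *m nmx 0 0 1) = nmx 0 0 (-1) *m s2 R.
  by apply: mulmx1_invmx; rewrite !mul_mx3 mx3_1; congr mx3; ring.
exists 1%N, [tuple dmx (-2) 1 1]; split => //=; first by rewrite seq1_free dmx_neq0 ?oner_neq0.
move=> X; rewrite (stabLie_base X Emi) span_seq1; split.
  rewrite [X]mx3_eta tr_mx3 /w0 !mul_mx3 !upper_mx3.
  move=> [T /and3P[/eqP X10 /eqP X20 /eqP X21] /and3P[/eqP X01 /eqP X02 /eqP X12]
           /and3P[/eqP Y10 /eqP Y20 /eqP Y21]].
  by apply/vlineP; exists (X 1 1); rewrite scale_mx3; congr mx3; lra.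
move=> /vlineP[t ->]; rewrite scale_mx3; split.
- by rewrite tr_mx3; ring.
- by rewrite upper_mx3; apply/and3P; split; apply/eqP; ring.
- by rewrite !mul_mx3 upper_mx3; apply/and3P; split; apply/eqP; ring.
- by rewrite !mul_mx3 upper_mx3; apply/and3P; split; apply/eqP; ring.
Qed.

End SL3.

Theorem mainTheorem8 (R : realType) :
  (* (a) *)
  (let x1 : pt R := (1%:M, w0 R, s1 R *m nmx 1 0 0) in
   let x2 : pt R := (1%:M, w0 R, s1 R *m nmx 0 0 0) in
   (forall y, inS (w0 R) (s1 R) y <-> isPt y /\ (inOrbit x1 y \/ inOrbit x2 y)) /\
       ~ inOrbit x1 x2 /\
       orbit_dim x1 7 /\
       (forall h, inStab x1 h <-> exists a : R, a != 0 /\ h = dmx a a (a ^-2)) /\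
       orbit_dim x2 6 /\
       (forall h, inStab x2 h <-> inG h /\ exists a b c : R, h = dmx a b c)) /\
  (* (b) *)
  (let x1 : pt R := (1%:M, w0 R, s2 R *m nmx 0 0 1) in
   let x2 : pt R := (1%:M, w0 R, s2 R *m nmx 0 0 0) in
   (forall y, inS (w0 R) (s2 R) y <-> isPt y /\ (inOrbit x1 y \/ inOrbit x2 y)) /\
       ~ inOrbit x1 x2 /\
       orbit_dim x1 7 /\
       (forall h, inStab x1 h <-> exists a : R, a != 0 /\ h = dmx (a ^-2) a a) /\
       orbit_dim x2 6 /\
       (forall h, inStab x2 h <-> inG h /\ exists a b c : R, h = dmx a b c)) /\
  (* (c) *)
  (let x0 : pt R := (1%:M, w0 R, 1%:M) in
   (forall y, inS (w0 R) 1%:M y <-> isPt y /\ inOrbit x0 y) /\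
       orbit_dim x0 6 /\
       (forall h, inStab x0 h <-> inG h /\ exists a b c : R, h = dmx a b c)).
Proof.
have cell_s1 y := inS_w0_two_orbits y (s1_inG R) (nmx_inP 1 0 0) (nmx_inP 0 0 0) (@s1_PmD R).
have cell_s2 y := inS_w0_two_orbits y (s2_inG R) (nmx_inP 0 0 1) (nmx_inP 0 0 0) (@s2_PmD R).
split; [|split]; cbv zeta.
- split; first exact: cell_s1.
  split; first exact: not_inOrbit_s1.
  split; first exact: orbit_dim_s1n.
  split; first exact: inStab_s1n.
  by split; [exact: orbit_dim_s1 | exact: inStab_s1].
- split; first exact: cell_s2.
  split; first exact: not_inOrbit_s2.
  split; first exact: orbit_dim_s2n.
  split; first exact: inStab_s2n.
  by split; [exact: orbit_dim_s2 | exact: inStab_s2].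
- split; first exact: inS_w0_1_orbit.
  by split; [exact: orbit_dim_1 | exact: inStab_1].
Qed.
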